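(* Let $\rho_1, \sigma_1$ be commuting density operators on $\mathbb{C}^2$ and let $\rho_2, \sigma_2$ be density operators on $\mathbb{C}^d$. The following two conditions are equivalent: (i) there exists a completely positive trace-preserving map $\mathcal{E}$ from operators on $\mathbb{C}^2$ to operators on $\mathbb{C}^d$ such that $\mathcal{E}(\rho_1)=\rho_2$ and $\mathcal{E}(\sigma_1)=\sigma_2$; (ii) $D_{\max}(\rho_1\|\sigma_1)\ge D_{\max}(\rho_2\|\sigma_2)$ and $D_{\max}(\sigma_1\|\rho_1)\ge D_{\max}(\sigma_2\|\rho_2)$.
   Context: For density operators $\rho,\sigma$, the max-divergence is $D_{\max}(\rho\|\sigma) := \inf\{\lambda\in\mathbb{R} : \rho \le 2^{\lambda}\sigma\}$ (with $\inf\emptyset=+\infty$), where $\le$ is the Löwner order and $\log$ is base 2. *)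

From HB Require Import structures.
From mathcomp Require Import all_boot all_order all_algebra.
From mathcomp Require Import all_classical all_reals all_analysis.
From mathcomp Require Import complex mxtens.

Set Implicit Arguments.
Unset Strict Implicit.
Unset Printing Implicit Defensive.

Import Order.TTheory GRing.Theory Num.Theory.
Local Open Scope ring_scope.

Section QDefs.
Variable R : realType.
Local Notation C := (R[i]).

Definition adjmx {m n} (A : 'M[C]_(m, n)) : 'M[C]_(n, m) :=
  map_mx (@conjc R) A^T.

Definition psdmx {n} (A : 'M[C]_n) : Prop :=
  adjmx A = A /\ forall v : 'cV[C]_n, 0 <= (adjmx v *m A *m v) 0 0.

Definition loewner_le {n} (A B : 'M[C]_n) : Prop := psdmx (B - A).

Definition density {n} (A : 'M[C]_n) : Prop := psdmx A /\ \tr A = 1.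

(* max-divergence D_max(rho||sigma) = inf { l in R | rho <= 2^l sigma },
   as an extended real (inf of the empty set is +oo); 2^l = powR 2 l. *)
Definition Dmax {n} (rho sigma : 'M[C]_n) : \bar R :=
  ereal_inf [set (l%:E)%E | l in
     [set l : R | loewner_le rho ((real_complex R (powR 2 l)) *: sigma)]].

Definition blockmx {k m} (X : 'M[C]_(k * m)) (i j : 'I_k) : 'M[C]_m :=
  \matrix_(a, b) X (mxtens_index (i, a)) (mxtens_index (j, b)).

(* the ampliation id_k (x) E, acting blockwise on 'M_(k*m) *)
Definition ampliation {m n} k (E : 'M[C]_m -> 'M[C]_n) (X : 'M[C]_(k * m))
  : 'M[C]_(k * n) :=
  \matrix_(p, q)
     E (blockmx X (mxtens_unindex p).1 (mxtens_unindex q).1)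
       (mxtens_unindex p).2 (mxtens_unindex q).2.

Definition completely_positive {m n} (E : 'M[C]_m -> 'M[C]_n) : Prop :=
  forall (k : nat) (X : 'M[C]_(k * m)), psdmx X -> psdmx (@ampliation m n k E X).

Definition trace_preserving {m n} (E : 'M[C]_m -> 'M[C]_n) : Prop :=
  forall X : 'M[C]_m, \tr (E X) = \tr X.

Definition cptp {m n} (E : 'M[C]_m -> 'M[C]_n) : Prop :=
  linear E /\ completely_positive E /\ trace_preserving E.

End QDefs.

(* A CPTP map preserves every Loewner inequality rho <= c sigma, so it can only
   decrease D_max.  Conversely, commuting qubit states are diagonal in a common
   orthonormal basis, rho1 = diag(p, 1 - p) and sigma1 = diag(q, 1 - q), and the
   channel that measures in this basis and prepares w0 or w1 sends them to
   p w0 + (1 - p) w1 and q w0 + (1 - q) w1.  For q < p the solution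
   w0 = ((1 - q) rho2 - (1 - p) sigma2) / (p - q), w1 = (p sigma2 - q rho2) / (p - q)
   is positive exactly when rho2 <= (p / q) sigma2 and
   sigma2 <= ((1 - q) / (1 - p)) rho2, and these follow from the two D_max
   inequalities because p / q and (1 - q) / (1 - p) are the optimal constants for
   the first pair and the infimum defining D_max is attained.  The case p < q is
   the same after relabelling the basis, and p = q forces rho2 = sigma2. *)

From HB Require Import structures.
From mathcomp Require Import all_boot all_order all_algebra.
From mathcomp Require Import all_classical all_reals all_analysis.
From mathcomp Require Import complex mxtens.
From mathcomp Require Import ring lra.

Set Implicit Arguments.
Unset Strict Implicit.
Unset Printing Implicit Defensive.

Import Order.TTheory GRing.Theory Num.Theory.
Local Open Scope ring_scope.

Section MaxDivergenceQubit.
Variable R : realType.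
Local Notation C := R[i].

Lemma adjmxM m n p (A : 'M[C]_(m, n)) (B : 'M[C]_(n, p)) :
  adjmx (A *m B) = adjmx B *m adjmx A.
Proof. by rewrite /adjmx trmx_mul map_mxM. Qed.

Lemma adjmxK m n (A : 'M[C]_(m, n)) : adjmx (adjmx A) = A.
Proof. by apply/matrixP => i j; rewrite !mxE conjcK. Qed.

Lemma adjmxD m n (A B : 'M[C]_(m, n)) : adjmx (A + B) = adjmx A + adjmx B.
Proof. by rewrite /adjmx linearD map_mxD. Qed.

Lemma adjmxZ m n a (A : 'M[C]_(m, n)) : adjmx (a *: A) = a^* *: adjmx A.
Proof. by apply/matrixP => i j; rewrite !mxE rmorphM. Qed.

Lemma adjmx_tens m n p q (A : 'M[C]_(m, n)) (B : 'M[C]_(p, q)) :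
  adjmx (A *t B) = adjmx A *t adjmx B.
Proof. by rewrite /adjmx trmx_tens map_mxT. Qed.

Lemma adjmx1 n : adjmx (1%:M : 'M[C]_n) = 1%:M.
Proof. by rewrite /adjmx trmx1 map_mx1. Qed.

Lemma adjmx_delta n (j : 'I_n) : adjmx (delta_mx j 0 : 'cV[C]_n) = delta_mx 0 j.
Proof. by apply/matrixP => k l; rewrite !mxE conjc_nat andbC. Qed.

Definition qform n (A : 'M[C]_n) (v : 'cV[C]_n) : C := (adjmx v *m A *m v) 0 0.

Lemma qformD n (A B : 'M[C]_n) v : qform (A + B) v = qform A v + qform B v.
Proof. by rewrite /qform mulmxDr mulmxDl mxE. Qed.

Lemma qformZ n a (A : 'M[C]_n) v : qform (a *: A) v = a * qform A v.
Proof. by rewrite /qform -scalemxAr -scalemxAl mxE. Qed.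

Lemma qformB n (A B : 'M[C]_n) v : qform (A - B) v = qform A v - qform B v.
Proof. by rewrite qformD -scaleN1r qformZ mulN1r. Qed.

Lemma qform_congr n m (A : 'M[C]_n) (B : 'M[C]_(n, m)) v :
  qform (adjmx B *m A *m B) v = qform A (B *m v).
Proof. by rewrite /qform adjmxM !mulmxA. Qed.

Lemma qform_adj n (A : 'M[C]_n) v : qform (adjmx A) v = (qform A v)^*.
Proof.
rewrite /qform; have -> : adjmx v *m adjmx A *m v = adjmx (adjmx v *m A *m v).
  by rewrite !adjmxM adjmxK mulmxA.
by rewrite /adjmx !mxE.
Qed.

Lemma qformE n (A : 'M[C]_n) v :
  qform A v = \sum_i \sum_j (v i 0)^* * A i j * v j 0.
Proof.
rewrite /qform mxE; under eq_bigr do rewrite mxE big_distrl /=.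
by rewrite exchange_big; apply: eq_bigr => i _; apply: eq_bigr => j _; rewrite !mxE.
Qed.

Lemma qform_pair n (A : 'M[C]_n) i j a b :
  qform A (a *: delta_mx i 0 + b *: delta_mx j 0) =
  a^* * a * A i i + a^* * b * A i j + b^* * a * A j i + b^* * b * A j j.
Proof.
have entry k l : (delta_mx 0 k : 'rV_n) *m A *m (delta_mx l 0 : 'cV_n) = (A k l)%:M.
  by apply/matrixP => x y; rewrite -rowE -colE !ord1 !mxE eqxx mulr1n.
rewrite /qform adjmxD !adjmxZ !adjmx_delta.
rewrite !(mulmxDl, mulmxDr, =^~ scalemxAl, =^~ scalemxAr) !entry !mxE eqxx.
by rewrite !mulr1n; ring.
Qed.

Lemma qform_eq0 n (A : 'M[C]_n) : (forall v, qform A v = 0) -> A = 0.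
Proof.
move=> A0; apply/matrixP => i j; rewrite mxE.
have q a b : a^* * a * A i i + a^* * b * A i j + b^* * a * A j i + b^* * b * A j j = 0.
  by rewrite -qform_pair A0.
have Aii : A i i = 0 by rewrite -(q 1 0) conjC1 conjC0; ring.
have Ajj : A j j = 0 by rewrite -(q 0 1) conjC1 conjC0; ring.
have sum0 : A i j + A j i = 0 by rewrite -(q 1 1) conjC1 Aii Ajj; ring.
have diff0 : 'i * A i j - 'i * A j i = 0 by rewrite -(q 1 'i) conjC1 conjCi Aii Ajj; ring.
have polar : A i j *+ 2 = (A i j + A j i) - 'i * ('i * A i j - 'i * A j i).
  by rewrite mulrBr !mulrA -expr2 sqrCi; ring.
have : A i j *+ 2 == 0 by rewrite polar sum0 diff0 mulr0 subr0.
by rewrite mulrn_eq0 => /eqP.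
Qed.

(* Over C the Hermitian half of psdmx is automatic: A - A^* has a vanishing
   quadratic form once all values qform A v are real. *)
Lemma psdP n (A : 'M[C]_n) : psdmx A <-> forall v, 0 <= qform A v.
Proof.
split=> [[_ A_ge0] //|A_ge0]; split=> //.
suff : A - adjmx A = 0 by move/eqP; rewrite subr_eq0 => /eqP.
apply: qform_eq0 => v; rewrite qformB qform_adj.
by rewrite conj_Creal ?subrr // ger0_real.
Qed.

Lemma psd_add n (A B : 'M[C]_n) : psdmx A -> psdmx B -> psdmx (A + B).
Proof. by move=> /psdP A0 /psdP B0; apply/psdP => v; rewrite qformD addr_ge0. Qed.

Lemma psd_scale n (A : 'M[C]_n) c : 0 <= c -> psdmx A -> psdmx (c *: A).
Proof. by move=> c0 /psdP A0; apply/psdP => v; rewrite qformZ mulr_ge0. Qed.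

Lemma psd_congr n m (A : 'M[C]_n) (B : 'M[C]_(n, m)) :
  psdmx A -> psdmx (adjmx B *m A *m B).
Proof. by move=> /psdP A0; apply/psdP => v; rewrite qform_congr. Qed.

Lemma psd_diag_ge0 n (A : 'M[C]_n) i : psdmx A -> 0 <= A i i.
Proof.
move=> /psdP /(_ (1 *: delta_mx i 0 + 0 *: delta_mx i 0)).
by rewrite qform_pair conjC1 conjC0 (_ : _ + _ = A i i) //; ring.
Qed.

Lemma psd_diag_mx n (D : 'M[C]_n) :
  is_diag_mx D -> (forall i, 0 <= D i i) -> psdmx D.
Proof.
move=> /is_diag_mxP D_diag D_ge0; apply/psdP => v; rewrite qformE.
apply: sumr_ge0 => i _; rewrite (bigD1 i) //= big1 ?addr0 => [|j ji].
  by rewrite mulrAC mulr_ge0 // mulrC mul_conjC_ge0.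
by rewrite D_diag ?mulr0 ?mul0r // eq_sym.
Qed.

Lemma loewner_anti n (A B : 'M[C]_n) : loewner_le A B -> loewner_le B A -> A = B.
Proof.
move=> /psdP AB /psdP BA; apply/eqP; rewrite -subr_eq0; apply/eqP.
apply: qform_eq0 => v; apply/eqP; rewrite eq_le BA andbT.
by rewrite qformB -oppr_ge0 opprB -qformB AB.
Qed.

Lemma loewner_congr n m (A B : 'M[C]_n) (P : 'M[C]_(n, m)) :
  loewner_le A B -> loewner_le (adjmx P *m A *m P) (adjmx P *m B *m P).
Proof. by rewrite /loewner_le -mulmxBl -mulmxBr; exact: psd_congr. Qed.

Lemma loewner_le_scale n (A B : 'M[C]_n) (x y : R) : psdmx B -> 0 <= x -> 0 <= y ->
  (0 < x -> loewner_le A ((y / x)%:C%C *: B)) ->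
  loewner_le (x%:C%C *: A) (y%:C%C *: B).
Proof.
move=> B0 x0 y0 AB; rewrite /loewner_le; move: x0; rewrite le_eqVlt => /predU1P[<- | x_gt0].
  by rewrite rmorph0 scale0r subr0; apply: psd_scale; rewrite ?ler0c.
have -> : y%:C%C *: B - x%:C%C *: A = x%:C%C *: ((y / x)%:C%C *: B - A).
  by rewrite scalerBr scalerA -rmorphM mulrCA divff ?mulr1 // gt_eqF.
by apply: psd_scale; [rewrite ler0c ltW | exact: AB].
Qed.

Lemma psd_qformRe n (A : 'M[C]_n) v :
  psdmx A -> qform A v = (complex.Re (qform A v))%:C%C.
Proof. by move=> /psdP A0; rewrite RRe_real // ger0_real. Qed.

Lemma psd_qformRe_ge0 n (A : 'M[C]_n) v : psdmx A -> 0 <= complex.Re (qform A v).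
Proof. by move=> A0; rewrite -ler0c -psd_qformRe //; move/psdP: A0. Qed.

Lemma loewner_le_scaleP n (A B : 'M[C]_n) (c : R) : psdmx A -> psdmx B ->
  loewner_le A (c%:C%C *: B) <->
  forall v, complex.Re (qform A v) <= c * complex.Re (qform B v).
Proof.
move=> A0 B0; have qformBZ v : qform (c%:C%C *: B - A) v =
    (c * complex.Re (qform B v) - complex.Re (qform A v))%:C%C.
  by rewrite qformB qformZ (psd_qformRe v A0) (psd_qformRe v B0) -rmorphM -rmorphB.
rewrite /loewner_le psdP; split=> AB v; have := AB v;
  by rewrite qformBZ ler0c subr_ge0.
Qed.

Lemma log2K (y : R) : 0 < y -> powR 2 (ln y / ln 2) = y.
Proof.
by move=> y0; rewrite /powR pnatr_eq0 /= mulfVK ?lnK ?posrE // gt_eqF // ln_gt0 // ltr1n.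
Qed.

Lemma le_pow2_mul_gt (a b x : R) : 0 <= a ->
  (forall l, x < l -> b <= powR 2 l * a) -> b <= powR 2 x * a.
Proof.
rewrite le_eqVlt => /predU1P[<- | a_gt0] b_le; apply/ler_addgt0Pr => e e_gt0.
  rewrite mulr0 add0r (le_trans _ (ltW e_gt0)) //.
  by rewrite -(mulr0 (powR 2 (x + 1))) b_le // ltrDl.
set z := _ + e.
(* take l = log2 (z / a) *)
have xz : powR 2 x < z / a by rewrite ltr_pdivlMr // ltrDl.
have za_gt0 : 0 < z / a by apply: le_lt_trans xz; exact: powR_ge0.
have ln2_gt0 : 0 < ln (2 : R) by rewrite ln_gt0 // ltr1n.
rewrite -[z](divfK (lt0r_neq0 a_gt0)) -[z / a]log2K // b_le //.
by rewrite ltr_pdivlMr // -ln_powR ltr_ln ?posrE ?powR_gt0.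
Qed.

Lemma Dmax_le n (A B : 'M[C]_n) l :
  loewner_le A ((powR 2 l)%:C%C *: B) -> (Dmax A B <= l%:E)%E.
Proof. by move=> AB; apply: ereal_inf_lbound; exists l. Qed.

Lemma Dmax_monotone n m (A1 B1 : 'M[C]_n) (A2 B2 : 'M[C]_m) :
  (forall l, loewner_le A1 ((powR 2 l)%:C%C *: B1) ->
             loewner_le A2 ((powR 2 l)%:C%C *: B2)) ->
  (Dmax A2 B2 <= Dmax A1 B1)%E.
Proof. by move=> AB12; apply: ereal_inf_le_tmp => _ [l /AB12 AB2 <-]; exists l. Qed.

Lemma Dmax_feasible n (A B : 'M[C]_n) x : psdmx A -> psdmx B ->
  (Dmax A B <= x%:E)%E -> loewner_le A ((powR 2 x)%:C%C *: B).
Proof.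
move=> A0 B0 Dx; apply/loewner_le_scaleP => // v.
apply: le_pow2_mul_gt => [|l xl]; first exact: psd_qformRe_ge0.
have /ereal_inf_lt [_ [l' AB' <-]] : (Dmax A B < l%:E)%E by apply: le_lt_trans Dx _; rewrite lte_fin.
rewrite lte_fin => l'l; apply: le_trans ((loewner_le_scaleP _ A0 B0).1 AB' v) _.
by rewrite ler_wpM2r ?psd_qformRe_ge0 ?ler_powR ?ler1n ?ltW.
Qed.

Lemma loewner_le_of_Dmax n m (A1 B1 : 'M[C]_n) (A2 B2 : 'M[C]_m) (c : R) :
  psdmx A2 -> psdmx B2 -> (Dmax A2 B2 <= Dmax A1 B1)%E -> 0 < c ->
  loewner_le A1 (c%:C%C *: B1) -> loewner_le A2 (c%:C%C *: B2).
Proof.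
move=> A0 B0 D21 c_gt0 AB1; rewrite -(log2K c_gt0); apply: Dmax_feasible => //.
by apply: le_trans D21 _; apply: Dmax_le; rewrite log2K.
Qed.

Lemma psd0 n : psdmx (0 : 'M[C]_n).
Proof. by apply/psdP => v; rewrite /qform mulmx0 mul0mx mxE. Qed.

Lemma psd_sum n I (r : seq I) (P : pred I) (F : I -> 'M[C]_n) :
  (forall i, P i -> psdmx (F i)) -> psdmx (\sum_(i <- r | P i) F i).
Proof.
move=> F0; apply: (big_ind (fun A : 'M[C]_n => psdmx A)) => //.
  exact: psd0.
exact: psd_add.
Qed.

Lemma psd1 n : psdmx (1%:M : 'M[C]_n).
Proof.
by apply: psd_diag_mx => [|i]; rewrite ?scalar_mx_is_diag // mxE eqxx mulr1n ler01.
Qed.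

Lemma sum_mxtens_index k m (F : 'I_(k * m) -> C) :
  \sum_p F p = \sum_a \sum_b F (mxtens_index (a, b)).
Proof.
rewrite (reindex (@mxtens_index k m)) /=; last first.
  by apply: onW_bij; exists (@mxtens_unindex k m); [exact: mxtens_indexK | exact: mxtens_unindexK].
by rewrite pair_big; apply: eq_bigr => -[].
Qed.

Lemma psd_tens_diag k d (Y : 'M[C]_k) (lam : 'rV[C]_d) :
  psdmx Y -> (forall j, 0 <= lam 0 j) -> psdmx (Y *t diag_mx lam).
Proof.
move=> /psdP Y0 lam0; apply/psdP => v.
suff -> : qform (Y *t diag_mx lam) v =
    \sum_b lam 0 b * qform Y (\col_a v (mxtens_index (a, b)) 0).
  by apply: sumr_ge0 => b _; apply: mulr_ge0.
rewrite qformE sum_mxtens_index exchange_big; apply: eq_bigr => b _.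
rewrite qformE big_distrr; apply: eq_bigr => a _.
rewrite sum_mxtens_index big_distrr; apply: eq_bigr => a' _.
rewrite (bigD1 b) //= big1 => [|b' b'b]; last first.
  by rewrite tensmxE mxE eq_sym (negbTE b'b) mulr0n mulr0 mulr0 mul0r.
by rewrite addr0 tensmxE !mxE eqxx mulr1n; ring.
Qed.

Lemma psd_spectral d (W : 'M[C]_d) : psdmx W ->
  exists (Q : 'M[C]_d) (lam : 'rV[C]_d),
    [/\ adjmx Q *m Q = 1%:M, W = adjmx Q *m diag_mx lam *m Q & forall j, 0 <= lam 0 j].
Proof.
move=> W0; have W_herm : map_mx Num.conj W^T = W := W0.1.
have W_normal : W \is normalmx by apply/normalmxP; rewrite W_herm.
have /orthomx_spectralP := W_normal; rewrite invmx_unitary ?spectral_unitarymx //.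
set Q := spectralmx W; set lam := spectral_diag W => W_eq.
have QQ : Q *m adjmx Q = 1%:M by apply/unitarymxP; exact: spectral_unitarymx.
exists Q, lam; split=> [||j]; [exact: mulmx1C | exact: W_eq |].
have := psd_diag_ge0 j (psd_congr (adjmx Q) W0).
by rewrite adjmxK {1}W_eq !mulmxA QQ mul1mx -mulmxA QQ mulmx1 mxE eqxx mulr1n.
Qed.

Lemma psd_tens k d (Y : 'M[C]_k) (W : 'M[C]_d) :
  psdmx Y -> psdmx W -> psdmx (Y *t W).
Proof.
move=> Y0 /psd_spectral[Q [lam [_ -> lam0]]].
have -> : Y *t (adjmx Q *m diag_mx lam *m Q) =
    adjmx (1%:M *t Q) *m (Y *t diag_mx lam) *m (1%:M *t Q).
  by rewrite adjmx_tens adjmx1 !tensmx_mul mul1mx mulmx1.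
exact/psd_congr/psd_tens_diag.
Qed.

Lemma psd_block_compress k l m (P : 'M[C]_(l, m)) (X : 'M[C]_(k * m)) i :
  psdmx X -> psdmx (\matrix_(a, b) (P *m blockmx X a b *m adjmx P) i i).
Proof.
move=> /psdP X0; apply/psdP => v.
pose w : 'cV[C]_(k * m) :=
  \col_p (v (mxtens_unindex p).1 0 * (P i (mxtens_unindex p).2)^*).
suff -> : qform (\matrix_(a, b) (P *m blockmx X a b *m adjmx P) i i) v = qform X w.
  exact: X0.
rewrite !qformE sum_mxtens_index; apply: eq_bigr => a _.
under [RHS]eq_bigr do rewrite sum_mxtens_index.
rewrite [RHS]exchange_big; apply: eq_bigr => b _; rewrite [RHS]exchange_big.
rewrite mxE mxE big_distrr big_distrl; apply: eq_bigr => c' _ /=.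
rewrite mxE big_distrl big_distrr big_distrl; apply: eq_bigr => c _ /=.
rewrite !mxE !mxtens_indexK /= rmorphM /= conjCK.
by ring.
Qed.

Lemma blockmx_tens k m (Y : 'M[C]_k) (A : 'M[C]_m) i j :
  blockmx (Y *t A) i j = Y i j *: A.
Proof. by apply/matrixP => a b; rewrite [LHS]mxE tensmxE mxE. Qed.

Lemma blockmx_ampliation m n k (E : 'M[C]_m -> 'M[C]_n) (X : 'M[C]_(k * m)) i j :
  blockmx (ampliation E X) i j = E (blockmx X i j).
Proof. by apply/matrixP => a b; rewrite !mxE !mxtens_indexK. Qed.

Lemma psd_blockmx k m (X : 'M[C]_(k * m)) i : psdmx X -> psdmx (blockmx X i i).
Proof.
move=> X0; apply/psdP => v.
by have := psd_diag_ge0 i (psd_block_compress (adjmx v) 0 X0); rewrite mxE adjmxK.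
Qed.

Lemma cp_psd m n (E : 'M[C]_m -> 'M[C]_n) A :
  completely_positive E -> psdmx A -> psdmx (E A).
Proof.
move=> E_cp A0; have := psd_blockmx 0 (E_cp 1 _ (psd_tens (psd1 1) A0)).
by rewrite blockmx_ampliation blockmx_tens mxE eqxx mulr1n scale1r.
Qed.

Lemma cptp_loewner m n (E : 'M[C]_m -> 'M[C]_n) A B c :
  cptp E -> loewner_le A (c *: B) -> loewner_le (E A) (c *: E B).
Proof.
move=> [E_lin [E_cp _]] AB; rewrite /loewner_le.
by rewrite -(scalable_linear E_lin) -(zmod_morphism_linear E_lin); exact: cp_psd.
Qed.

Lemma Dmax_cptp m n (E : 'M[C]_m -> 'M[C]_n) A B :
  cptp E -> (Dmax (E A) (E B) <= Dmax A B)%E.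
Proof. by move=> E_cptp; apply: Dmax_monotone => l; apply: cptp_loewner. Qed.

Definition measure_prepare m d k (P : 'M[C]_(k, m)) (W : 'I_k -> 'M[C]_d)
    (X : 'M[C]_m) : 'M[C]_d :=
  \sum_i (P *m X *m adjmx P) i i *: W i.

Lemma measure_prepare_cptp m d k (P : 'M[C]_(k, m)) (W : 'I_k -> 'M[C]_d) :
  adjmx P *m P = 1%:M -> (forall i, density (W i)) -> cptp (measure_prepare P W).
Proof.
move=> PP W_dens; split; [|split].
- move=> a X Y; rewrite /measure_prepare scaler_sumr -big_split; apply: eq_bigr => i _ /=.
  by rewrite mulmxDr mulmxDl -scalemxAr -scalemxAl !mxE scalerDl scalerA.
- move=> l X X0.
  have -> : ampliation (measure_prepare P W) X =
      \sum_i (\matrix_(a, b) (P *m blockmx X a b *m adjmx P) i i) *t W i.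
    by apply/matrixP => p q; rewrite !(mxE, summxE); apply: eq_bigr => i _; rewrite !mxE.
  apply: psd_sum => i _; apply: psd_tens; first exact: psd_block_compress.
  exact: (W_dens i).1.
- move=> X; rewrite /measure_prepare linear_sum /=.
  under eq_bigr do rewrite mxtraceZ (W_dens _).2 mulr1.
  by rewrite -/(mxtrace _) mxtrace_mulC mulmxA PP mul1mx.
Qed.

Lemma measure_prepare_congr m d k (P : 'M[C]_(k, m)) (W : 'I_k -> 'M[C]_d) D :
  P *m adjmx P = 1%:M -> measure_prepare P W (adjmx P *m D *m P) = \sum_i D i i *: W i.
Proof. by move=> PP; rewrite /measure_prepare !mulmxA PP mul1mx -mulmxA PP mulmx1. Qed.

Lemma hermitian_trig_diag n (T : 'M[C]_n) : adjmx T = T -> is_trig_mx T -> is_diag_mx T.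
Proof.
move=> T_herm /is_trig_mxP T_trig; apply/is_diag_mxP => i j.
rewrite neq_ltn => /orP[ij | ji]; first exact: T_trig.
by rewrite -T_herm !mxE T_trig // conjc0.
Qed.

Lemma hermitian_codiag n (A B : 'M[C]_n) : adjmx A = A -> adjmx B = B ->
  A *m B = B *m A ->
  exists P : 'M[C]_n, [/\ P *m adjmx P = 1%:M,
    is_diag_mx (P *m A *m adjmx P) & is_diag_mx (P *m B *m adjmx P)].
Proof.
move=> A_herm B_herm AB; have [P P_unitary /andP[A_trig B_trig]] := cotrigonalization2 AB.
have PP : P *m adjmx P = 1%:M by apply/unitarymxP.
have congr_herm M : adjmx M = M -> adjmx (P *m M *m adjmx P) = P *m M *m adjmx P.
  by move=> M_herm; rewrite !adjmxM adjmxK M_herm mulmxA.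
have trig M : similar_trig P M -> is_trig_mx (P *m M *m adjmx P).
  by rewrite /similar_to conjymx.
exists P; split; first exact: PP.
  by apply: hermitian_trig_diag; [exact: congr_herm | exact: trig].
by apply: hermitian_trig_diag; [exact: congr_herm | exact: trig].
Qed.

Definition bit_mx (t : R) : 'M[C]_2 :=
  diag_mx (\row_i (if i == 0 then t else 1 - t)%:C%C).

Lemma ord2P (i : 'I_2) : i = 0 \/ i = 1.
Proof. by case: i => [[|[|//]]] ?; [left|right]; apply: val_inj. Qed.

Lemma mxtrace2 (M : 'M[C]_2) : \tr M = M 0 0 + M 1 1.
Proof. by rewrite /mxtrace big_ord_recl big_ord1; congr (_ + M _ _); apply: val_inj. Qed.

Lemma loewner_bit_mx (s t c : R) : t <= c * s -> 1 - t <= c * (1 - s) ->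
  loewner_le (bit_mx t) (c%:C%C *: bit_mx s).
Proof.
move=> ts ts'; rewrite /loewner_le /bit_mx -linearZ -linearB /=.
apply: psd_diag_mx => [|i]; first exact: diag_mx_is_diag.
rewrite !mxE eqxx mulr1n -rmorphM -rmorphB ler0c subr_ge0.
by case: ifP.
Qed.

Lemma density_diag_qubit (T : 'M[C]_2) : density T -> is_diag_mx T ->
  exists2 t : R, 0 <= t <= 1 & T = bit_mx t.
Proof.
move=> [T0 T_tr] /is_diag_mxP T_diag.
have [t T00] : exists t : R, T 0 0 = t%:C%C.
  by apply/complex_realP/ger0_real/psd_diag_ge0.
have T11 : T 1 1 = (1 - t)%:C%C.
  have -> : (1 - t)%:C%C = 1 - t%:C%C by rewrite rmorphB rmorph1.
  by rewrite -T00 -T_tr mxtrace2 [T 0 0 + _]addrC addrK.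
have := psd_diag_ge0 0 T0; rewrite T00 ler0c => t0.
have := psd_diag_ge0 1 T0; rewrite T11 ler0c subr_ge0 => t1.
exists t; first by rewrite t0 t1.
apply/matrixP => i j; rewrite !mxE; have [<- | ij] := eqVneq i j.
  by case: (ord2P i) => ->; rewrite mulr1n ?T00 ?T11.
by rewrite T_diag // mulr0n.
Qed.

Lemma commuting_qubit_densities (rho sigma : 'M[C]_2) :
  density rho -> density sigma -> rho *m sigma = sigma *m rho ->
  exists P : 'M[C]_2, exists p q : R, [/\ P *m adjmx P = 1%:M,
    rho = adjmx P *m bit_mx p *m P, sigma = adjmx P *m bit_mx q *m P &
    (0 <= p <= 1) && (0 <= q <= 1)].
Proof.
move=> rho_dens sigma_dens comm.
have [P [PP rho_diag sigma_diag]] :=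
  hermitian_codiag rho_dens.1.1 sigma_dens.1.1 comm.
have P'P : adjmx P *m P = 1%:M by apply: mulmx1C.
have congr_dens M : density M -> density (P *m M *m adjmx P).
  move=> [M0 M_tr]; split; first by rewrite -{1}(adjmxK P); exact: psd_congr.
  by rewrite mxtrace_mulC mulmxA P'P mul1mx.
have congrK M : M = adjmx P *m (P *m M *m adjmx P) *m P.
  by rewrite !mulmxA P'P mul1mx -mulmxA P'P mulmx1.
have [p p01 rhoE] := density_diag_qubit (congr_dens _ rho_dens) rho_diag.
have [q q01 sigmaE] := density_diag_qubit (congr_dens _ sigma_dens) sigma_diag.
exists P, p, q; split; [exact: PP | | | by rewrite p01 q01].
  by rewrite -rhoE; exact: congrK.
by rewrite -sigmaE; exact: congrK.
Qed.

Lemma two_point_preparation_lt d (r s : 'M[C]_d) (a b : R) :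
  density r -> density s -> 0 <= b -> b < a -> a <= 1 ->
  (forall c, 0 < c -> a <= c * b -> 1 - a <= c * (1 - b) -> loewner_le r (c%:C%C *: s)) ->
  (forall c, 0 < c -> b <= c * a -> 1 - b <= c * (1 - a) -> loewner_le s (c%:C%C *: r)) ->
  exists w0 w1 : 'M[C]_d, [/\ density w0, density w1,
    a%:C%C *: w0 + (1 - a)%:C%C *: w1 = r & b%:C%C *: w0 + (1 - b)%:C%C *: w1 = s].
Proof.
move=> [r0 r_tr] [s0 s_tr] b0 ba a1 rs sr.
have ab_gt0 : 0 < a - b by rewrite subr_gt0.
have b1_gt0 : 0 < 1 - b by rewrite subr_gt0 (lt_le_trans ba).
have k0 : 0 <= ((a - b)^-1)%:C%C by rewrite ler0c invr_ge0 ltW.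
have s_le_r : loewner_le ((1 - a)%:C%C *: s) ((1 - b)%:C%C *: r).
  apply: loewner_le_scale => [||| a1_gt0]; [exact: r0 | by rewrite subr_ge0 | exact: ltW |].
  apply: sr; first exact: divr_gt0.
    by rewrite mulrAC ler_pdivlMr //; nra.
  by rewrite divfK ?(gt_eqF a1_gt0).
have r_le_s : loewner_le (b%:C%C *: r) (a%:C%C *: s).
  apply: loewner_le_scale => [||| b_gt0]; [exact: s0 | exact: b0 | exact: ltW (le_lt_trans b0 ba) |].
  apply: rs; first exact: divr_gt0 (lt_trans b_gt0 ba) b_gt0.
    by rewrite divfK ?(gt_eqF b_gt0).
  by rewrite mulrAC ler_pdivlMr //; nra.
exists (((a - b)^-1)%:C%C *: ((1 - b)%:C%C *: r - (1 - a)%:C%C *: s)).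
exists (((a - b)^-1)%:C%C *: (a%:C%C *: s - b%:C%C *: r)).
have ab_neq0 : a%:C%C - b%:C%C != 0 by rewrite -rmorphB fmorph_eq0 gt_eqF.
split; [split | split | |].
- exact: psd_scale s_le_r.
- rewrite mxtraceZ raddfB /= !mxtraceZ r_tr s_tr !mulr1 !(rmorphB, fmorphV, rmorph1) /=.
  by field.
- exact: psd_scale r_le_s.
- rewrite mxtraceZ raddfB /= !mxtraceZ r_tr s_tr !mulr1 !(rmorphB, fmorphV, rmorph1) /=.
  by field.
- apply/matrixP => i j; rewrite !mxE !(rmorphB, fmorphV, rmorph1) /=.
  by field.
- apply/matrixP => i j; rewrite !mxE !(rmorphB, fmorphV, rmorph1) /=.
  by field.
Qed.

Lemma two_point_preparation d (r s : 'M[C]_d) (a b : R) :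
  density r -> density s -> 0 <= a <= 1 -> 0 <= b <= 1 ->
  (forall c, 0 < c -> a <= c * b -> 1 - a <= c * (1 - b) -> loewner_le r (c%:C%C *: s)) ->
  (forall c, 0 < c -> b <= c * a -> 1 - b <= c * (1 - a) -> loewner_le s (c%:C%C *: r)) ->
  exists w0 w1 : 'M[C]_d, [/\ density w0, density w1,
    a%:C%C *: w0 + (1 - a)%:C%C *: w1 = r & b%:C%C *: w0 + (1 - b)%:C%C *: w1 = s].
Proof.
move=> r_dens s_dens /andP[a0 a1] /andP[b0 b1].
case: (ltgtP a b) => [ab | ba | <-] rs sr; last first.
- have r_eq_s : r = s.
    apply: loewner_anti; [move: (rs 1) | move: (sr 1)];
      by rewrite rmorph1 scale1r !mul1r => AB; apply: AB; rewrite ?ltr01.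
  exists r, r; rewrite -r_eq_s -scalerDl -rmorphD subrKC rmorph1 scale1r.
  by split.
- exact: two_point_preparation_lt.
(* a < b: relabel the two outcomes, i.e. pass to 1 - a and 1 - b *)
have [w0 [w1 [w0_dens w1_dens rE sE]]] :
    exists w0 w1 : 'M[C]_d, [/\ density w0, density w1,
      (1 - a)%:C%C *: w0 + (1 - (1 - a))%:C%C *: w1 = r &
      (1 - b)%:C%C *: w0 + (1 - (1 - b))%:C%C *: w1 = s].
  apply: two_point_preparation_lt => //; try lra.
    by move=> c c0; rewrite !subKr => ? ?; exact: rs.
  by move=> c c0; rewrite !subKr => ? ?; exact: sr.
exists w1, w0; split=> //; [rewrite -rE | rewrite -sE]; by rewrite subKr addrC.
Qed.

Lemma measure_prepare_bit_mx d (P : 'M[C]_2) (w0 w1 : 'M[C]_d) t :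
  P *m adjmx P = 1%:M ->
  measure_prepare P (fun i => if i == 0 then w0 else w1) (adjmx P *m bit_mx t *m P) =
  t%:C%C *: w0 + (1 - t)%:C%C *: w1.
Proof. by move=> PP; rewrite measure_prepare_congr // big_ord_recl big_ord1 !mxE !mulr1n. Qed.

Lemma channel_of_Dmax_le d (rho1 sigma1 : 'M[C]_2) (rho2 sigma2 : 'M[C]_d) :
  density rho1 -> density sigma1 -> rho1 *m sigma1 = sigma1 *m rho1 ->
  density rho2 -> density sigma2 ->
  (Dmax rho2 sigma2 <= Dmax rho1 sigma1)%E -> (Dmax sigma2 rho2 <= Dmax sigma1 rho1)%E ->
  exists E : 'M[C]_2 -> 'M[C]_d, cptp E /\ E rho1 = rho2 /\ E sigma1 = sigma2.
Proof.
move=> rho1_dens sigma1_dens comm rho2_dens sigma2_dens D_rs D_sr.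
have [P [p [q [PP rhoE sigmaE /andP[p01 q01]]]]] :=
  commuting_qubit_densities rho1_dens sigma1_dens comm.
rewrite rhoE sigmaE in D_rs D_sr.
have feasible (A2 B2 : 'M[C]_d) (a b : R) : psdmx A2 -> psdmx B2 ->
    (Dmax A2 B2 <= Dmax (adjmx P *m bit_mx a *m P) (adjmx P *m bit_mx b *m P))%E ->
    forall c, 0 < c -> a <= c * b -> 1 - a <= c * (1 - b) -> loewner_le A2 (c%:C%C *: B2).
  move=> A0 B0 D21 c c0 ab ab'; apply: loewner_le_of_Dmax A0 B0 D21 c0 _.
  by rewrite scalemxAl scalemxAr; apply/loewner_congr/loewner_bit_mx.
have [w0 [w1 [w0_dens w1_dens rho2E sigma2E]]] :=
  two_point_preparation rho2_dens sigma2_dens p01 q01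
    (feasible _ _ _ _ rho2_dens.1 sigma2_dens.1 D_rs)
    (feasible _ _ _ _ sigma2_dens.1 rho2_dens.1 D_sr).
exists (measure_prepare P (fun i => if i == 0 then w0 else w1)); split.
  apply: measure_prepare_cptp => [|i]; first exact: mulmx1C.
  by case: ifP.
by rewrite rhoE sigmaE !measure_prepare_bit_mx.
Qed.

End MaxDivergenceQubit.

Unset Implicit Arguments.

Theorem lemma1 (R : realType) (d : nat)
    (rho1 sigma1 : 'M[R[i]]_2) (rho2 sigma2 : 'M[R[i]]_d) :
  density rho1 -> density sigma1 -> rho1 *m sigma1 = sigma1 *m rho1 ->
  density rho2 -> density sigma2 ->
  (exists E : 'M[R[i]]_2 -> 'M[R[i]]_d,
      cptp E /\ E rho1 = rho2 /\ E sigma1 = sigma2) <->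
  ((Dmax rho2 sigma2 <= Dmax rho1 sigma1)%E /\
   (Dmax sigma2 rho2 <= Dmax sigma1 rho1)%E).
Proof.
move=> rho1_dens sigma1_dens comm rho2_dens sigma2_dens; split.
  by case=> E [E_cptp [<- <-]]; split; exact: Dmax_cptp.
by case; exact: channel_of_Dmax_le.
Qed.
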